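(* Let $n\ge 2$, let $a$ be the smallest prime divisor of $n$, and let $q$ be any prime power. Then $$\frac{1}{a}\prod_{\substack{k=1\\ a\nmid k}}^{n-1}(q^n-q^k)\ge q^{n(n-(n/a)-1)},$$ with equality only when $(n,q)=(2,2)$ or $(n,q)=(3,2)$. *)

From mathcomp Require Import all_boot all_order all_algebra.
Set Implicit Arguments. Unset Strict Implicit. Unset Printing Implicit Defensive.
Import Order.TTheory GRing.Theory Num.Theory.

Definition prime_power (q : nat) : Prop :=
  exists p e : nat, prime p /\ (0 < e)%N /\ q = (p ^ e)%N.

From mathcomp Require Import all_boot all_order all_algebra.
From mathcomp Require Import ring lra zify.
Set Implicit Arguments. Unset Strict Implicit. Unset Printing Implicit Defensive.
Import Order.TTheory GRing.Theory Num.Theory.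
Local Open Scope ring_scope.

(* Write [q^n - q^k = q^n (1 - t^(n-k))] with [t = 1/q <= 1/2]. Exactly
   [n - n/a] indices [k] are not multiples of [a], so the left-hand side is
   [q^(n(n - n/a)) / a] times a subproduct of [prod_(1 <= j < n) (1 - t^j)],
   and this full product is at least [1 - t - t^2 + t^n > 1/4] (the start of
   Euler's pentagonal expansion). Hence the ratio of the two sides exceeds
   [q^n / (4a) >= q^n / (4n)], which is at least [1] unless [q^n < 4n], that
   is unless [(n, q)] is [(2, 2)] or [(3, 2)]; those two cases are equalities. *)

Lemma prime_power_gt1 (q : nat) : prime_power q -> (1 < q)%N.
Proof.
case=> p [e [p_prime [e_gt0 ->]]].
by rewrite -[1%N](exp1n e) ltn_exp2r // prime_gt1.
Qed.

Lemma mul4n_leq_expn (q n0 n : nat) : (2 <= q)%N -> (0 < n0 <= n)%N ->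
  (4 * n0 <= q ^ n0)%N -> (4 * n <= q ^ n)%N.
Proof.
move=> q_ge2 /andP[n0_gt0 /subnKC <-] base.
elim: (n - n0)%N => [|d IHd]; first by rewrite addn0.
by rewrite addnS expnS; nia.
Qed.

Lemma sum1_ndvd (a n : nat) : (0 < a)%N -> (a %| n)%N ->
  (\sum_(1 <= k < n | ~~ (a %| k)) 1 = n - n %/ a)%N.
Proof.
move=> a_gt0; case: n => [|n] a_dvd_n; first by rewrite big_geq.
have all_k : (\sum_(1 <= k < n.+1) 1 = n)%N by rewrite sum_nat_const_nat muln1 subn1.
have dvd_k : (\sum_(1 <= k < n.+1 | a %| k) 1 = n.+1 %/ a - 1)%N.
  rewrite divn_count_dvd big_nat_recr //= a_dvd_n addn1 subn1 /= big_mkcond.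
  by apply: eq_bigr => k _; case: (a %| k)%N.
rewrite (bigID (fun k => a %| k)%N) /= dvd_k in all_k.
have : (0 < n.+1 %/ a)%N by rewrite divn_gt0 // dvdn_leq.
lia.
Qed.

Lemma prod_one_subX_ge (R : realDomainType) (t : R) (r : nat) :
  0 <= t <= 1 ->
  1 - t - t ^+ 2 + t ^+ r.+1 <= \prod_(1 <= j < r.+1) (1 - t ^+ j).
Proof.
move=> /andP[t_ge0 t_le1]; elim: r => [|[|r] IHr].
- by rewrite big_geq //; nra.
- by rewrite big_nat1 expr1; lra.
rewrite big_nat_recr //= [t ^+ r.+3]exprSr.
set y := t ^+ r.+2 in IHr *.
have y_ge0 : 0 <= y by apply: exprn_ge0.
have y_le_t2 : y <= t ^+ 2 by apply: ler_wiXn2l.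
have y_le1 : y <= 1 by apply: exprn_ile1.
have := ler_wpM2r (_ : 0 <= 1 - y) IHr; rewrite subr_ge0 => /(_ y_le1).
have : 0 <= y * (t ^+ 2 - y) by apply: mulr_ge0; lra.
by rewrite expr2 in y_le_t2 *; nra.
Qed.

Lemma quarter_lt_prod_one_subX (R : realFieldType) (t : R) (n : nat) :
  0 < t <= 2^-1 -> 4^-1 < \prod_(1 <= j < n) (1 - t ^+ j).
Proof.
move=> /andP[t_gt0 t_le_half]; case: n => [|r]; first by rewrite big_geq //; lra.
have t_unit : 0 <= t <= 1 by apply/andP; split; lra.
have := prod_one_subX_ge r t_unit.
have : 0 < t ^+ r.+1 by apply: exprn_gt0.
by rewrite expr2; nra.
Qed.

Lemma prod_subX_ge (R : realFieldType) (Q : R) (n : nat) (P : pred nat) :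
  1 <= Q ->
  Q ^+ (n * \sum_(1 <= k < n | P k) 1)%N * \prod_(1 <= j < n) (1 - Q^-1 ^+ j)
    <= \prod_(1 <= k < n | P k) (Q ^+ n - Q ^+ k).
Proof.
move=> Q_ge1; have Q_gt0 : 0 < Q by apply: lt_le_trans Q_ge1.
have t_ge0 : 0 <= Q^-1 by rewrite invr_ge0 ltW.
have t_le1 : Q^-1 <= 1 by rewrite invf_le1.
have tX_bound j : 0 <= 1 - Q^-1 ^+ j <= 1.
  by have := exprn_ge0 j t_ge0; have := exprn_ile1 j t_ge0 t_le1; lra.
have -> : \prod_(1 <= k < n | P k) (Q ^+ n - Q ^+ k)
    = \prod_(1 <= k < n | P k) Q ^+ n * \prod_(1 <= k < n | P k) (1 - Q^-1 ^+ (n - k)).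
  rewrite -big_split big_nat_cond [RHS]big_nat_cond /=.
  apply: eq_bigr => k /andP[/andP[_ /ltnW k_le_n] _].
  rewrite mulrBr mulr1 -(subnKC k_le_n) exprD exprVn subnKC //.
  by rewrite mulfK // expf_neq0 // gt_eqF.
have -> : \prod_(1 <= k < n | P k) Q ^+ n = Q ^+ (n * \sum_(1 <= k < n | P k) 1)%N.
  by rewrite exprM sum1_count big_const_seq -Monoid.iteropE.
apply: ler_wpM2l; first by rewrite !exprn_ge0 // ltW.
rewrite big_nat_rev [X in _ <= X]big_mkcond /=; apply: ler_prod => k _.
rewrite add1n subSS; have := tX_bound (n - k)%N.
by case: (P k) => // /andP[-> _]; exact: lexx.
Qed.

Lemma expn_lt_prod_subX_ndvd (R : realFieldType) (a n q : nat) :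
  (1 < a)%N -> (a %| n)%N -> (2 <= q)%N -> (4 * a <= q ^ n)%N ->
  (q ^ (n * (n - n %/ a - 1)))%:R
    < (a%:R)^-1 * \prod_(1 <= k < n | ~~ (a %| k)%N) ((q ^ n)%:R - (q ^ k)%:R) :> R.
Proof.
move=> a_gt1 a_dvd_n q_ge2 qn_ge.
have n_gt0 : (0 < n)%N by case: n {a_dvd_n} qn_ge => //=; lia.
have m_lt_n : (n %/ a < n)%N by rewrite ltn_Pdiv.
set Q : R := q%:R; set rhs := (q ^ _)%:R.
have Q_ge2 : 2 <= Q by rewrite (ler_nat _ 2).
have a_gt0 : 0 < (a%:R : R) by rewrite ltr0n ltnW.
have Qn_gt0 : 0 < Q ^+ n by rewrite exprn_gt0 //; lra.
have rhs_gt0 : 0 < rhs by rewrite ltr0n expn_gt0 ltnW.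
have Qn_ge : 4 * a%:R <= Q ^+ n by rewrite -natrX -natrM ler_nat.
have split_exp : Q ^+ (n * (n - n %/ a)) = rhs * Q ^+ n.
  by rewrite /rhs natrX -exprD -mulnSr subn1 prednK ?subn_gt0.
have prod_ge := prod_subX_ge n (fun k => ~~ (a %| k)%N) (_ : 1 <= Q).
rewrite sum1_ndvd ?(ltnW a_gt1) // split_exp in prod_ge.
have prod_gt : 4^-1 < \prod_(1 <= j < n) (1 - Q^-1 ^+ j).
  by apply: quarter_lt_prod_one_subX; rewrite invr_gt0 lef_pV2 ?posrE; lra.
set Pi := \prod_(1 <= j < n) _ in prod_gt prod_ge.
have a_lt : a%:R < Q ^+ n * Pi.
  by apply: le_lt_trans (_ : Q ^+ n * 4^-1 < _); rewrite ?ltr_pM2l //; lra.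
under eq_bigr do rewrite !natrX -/Q.
rewrite ltr_pdivlMl //; apply: lt_le_trans (prod_ge _); last lra.
by rewrite -mulrA mulrC ltr_pM2l.
Qed.

Theorem lemma5p6 (n q : nat) (hn : (2 <= n)%N) (hq : prime_power q) :
  let a := pdiv n in
  let lhs : rat := (a%:R)^-1 *
      \prod_(1 <= k < n | ~~ (a %| k)%N) ((q ^ n)%:R - (q ^ k)%:R) in
  let rhs : rat := (q ^ (n * (n - n %/ a - 1)))%:R in
  rhs <= lhs /\ (lhs = rhs -> (n, q) = (2, 2)%N \/ (n, q) = (3, 2)%N).
Proof.
move=> a lhs rhs; have q_gt1 := prime_power_gt1 hq.
have [/andP[/orP[/eqP n2 | /eqP n3] /eqP q2] | large] :
    ((n == 2) || (n == 3)) && (q == 2) \/ ((3 <= q) || (4 <= n))%N by lia.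
- by rewrite /lhs /rhs /a n2 q2 unlock; split; [|left].
- by rewrite /lhs /rhs /a n3 q2 unlock; split; [|right].
have a_prime : prime a by rewrite pdiv_prime.
have a_le_n : (a <= n)%N by rewrite pdiv_leq // ltnW.
have qn_ge : (4 * n <= q ^ n)%N.
  case/orP: large => [q_ge3 | n_ge4].
  - by apply: (@mul4n_leq_expn q 2); rewrite ?hn // expnS expn1; nia.
  - apply: (@mul4n_leq_expn q 4); rewrite ?n_ge4 //.
    by apply: (@leq_trans (2 ^ 4)); rewrite ?leq_exp2r.
have strict : rhs < lhs.
  apply: expn_lt_prod_subX_ndvd; rewrite ?(prime_gt1 a_prime) ?pdiv_dvd //.
  by rewrite (leq_trans _ qn_ge) // leq_mul2l.
split; first exact: ltW.
by move=> lhs_eq; rewrite lhs_eq ltxx in strict.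
Qed.
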